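(* Let $\mathcal F=(A,X,f)$ and $\mathcal G=(B,X,g)$ be fuzzy automata and let $\varphi:\mathcal F\to\mathcal G$ be an epimorphism. Then for each $i\in\{1,2,3\}$, $D_i(\mathcal F)\subseteq D_i(\mathcal G)$, and if $\mathcal F$ is D$i$-directable, then so is $\mathcal G$.
   Context: A fuzzy automaton is a triple $\mathcal F=(A,X,f)$ with $A$ a finite nonempty set of states, $X$ a finite nonempty alphabet, and $f:A\times X\times A\to[0,1]$, extended to words by $f^*(a,\varepsilon,a)=1$, $f^*(a,\varepsilon,b)=0$ ($b\neq a$), $f^*(a,vx,b)=\max_{c\in A}\min\{f^*(a,v,c),f(c,x,b)\}$. Let $\mathcal F(a,w)=\{b\in A\mid f^*(a,w,b)>0\}$. A word $w\in X^*$ is D1-directing for $\mathcal F$ if there is $c\in A$ with $\mathcal F(a,w)=\{c\}$ for all $a\in A$; D2-directing if $\mathcal F(a,w)=\mathcal F(b,w)$ for all $a,b\in A$; D3-directing if there is $c\in A$ with $c\in\mathcal F(a,w)$ for all $a\in A$. $D_i(\mathcal F)$ is the set of D$i$-directing words, and $\mathcal F$ is D$i$-directable if $D_i(\mathcal F)\neq\emptyset$. A mapping $\varphi:A\to B$ is a homomorphism $\mathcal F\to\mathcal G$ if $g(\varphi(a),x,b)=\max\{f(a,x,a')\mid a'\in A,\ \varphi(a')=b\}$ for all $a\in A$, $b\in B$, $x\in X$ (the maximum of the empty set being $0$); an epimorphism is a surjective homomorphism. *)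

From mathcomp Require Import all_boot all_order all_algebra.
Set Implicit Arguments. Unset Strict Implicit. Unset Printing Implicit Defensive.
Import Order.TTheory GRing.Theory Num.Theory.
Local Open Scope ring_scope.

Section Fuzzy.
Variable R : realDomainType.

Definition fuzzy_trans (A X : finType) (f : A -> X -> A -> R) : Prop :=
  forall a x b, 0 <= f a x b <= 1.

(* f^*(a, w, b), computed on the reversed word so that
   f^*(a, v x, b) = max_c min (f^*(a,v,c)) (f(c,x,b)). *)
Fixpoint fstar_rev (A X : finType) (f : A -> X -> A -> R) (a : A)
    (w : seq X) (b : A) : R :=
  match w with
  | [::] => if a == b then 1 else 0
  | x :: v => \big[Num.max/0]_(c : A) Num.min (fstar_rev f a v c) (f c x b)
  end.

Definition fstar (A X : finType) (f : A -> X -> A -> R) (a : A) (w : seq X)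
    (b : A) : R := fstar_rev f a (rev w) b.

Definition reach (A X : finType) (f : A -> X -> A -> R) (a : A) (w : seq X)
  : {set A} := [set b | 0 < fstar f a w b].

Definition D1dir (A X : finType) (f : A -> X -> A -> R) (w : seq X) : Prop :=
  exists c : A, forall a : A, reach f a w = [set c].
Definition D2dir (A X : finType) (f : A -> X -> A -> R) (w : seq X) : Prop :=
  forall a b : A, reach f a w = reach f b w.
Definition D3dir (A X : finType) (f : A -> X -> A -> R) (w : seq X) : Prop :=
  exists c : A, forall a : A, c \in reach f a w.

Definition directing (i : nat) (A X : finType) (f : A -> X -> A -> R)
    (w : seq X) : Prop :=
  match i with
  | 1 => D1dir f w
  | 2 => D2dir f w
  | _ => D3dir f w
  end.

Definition directable (i : nat) (A X : finType) (f : A -> X -> A -> R) : Prop :=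
  exists w : seq X, directing i f w.

Definition fuzzy_hom (A B X : finType) (f : A -> X -> A -> R)
    (g : B -> X -> B -> R) (phi : A -> B) : Prop :=
  forall (a : A) (b : B) (x : X),
    g (phi a) x b = \big[Num.max/0]_(a' : A | phi a' == b) f a x a'.

Definition fuzzy_epi (A B X : finType) (f : A -> X -> A -> R)
    (g : B -> X -> B -> R) (phi : A -> B) : Prop :=
  fuzzy_hom f g phi /\ (forall b : B, exists a : A, phi a = b).

End Fuzzy.

(* A homomorphism transports the positive part of the extended transition
   function: b is reachable from phi a by w in G exactly when b = phi a' for
   some a' reachable from a by w in F, i.e. G(phi a, w) = phi(F(a, w)).  Since
   an epimorphism reaches every state of G, each of the three directability
   conditions on F(-, w) is carried over to G(-, w) by taking images under phi. *)

From mathcomp Require Import all_boot all_order all_algebra.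
Import Order.TTheory GRing.Theory Num.Theory.
Local Open Scope ring_scope.

Lemma bigmax_gtP {d} {T : orderType d} {I : finType} {x : T} {P : pred I}
    {F : I -> T} :
  reflect (exists2 i, P i & (x < F i)%O) (x < \big[Order.max/x]_(i | P i) F i)%O.
Proof.
apply: (iffP idP) => [|[i Pi xFi]]; last exact: lt_le_trans xFi (le_bigmax_cond _ _ Pi).
move=> x_lt_max; apply/exists_inP; apply: contraLR x_lt_max => /exists_inPn noF.
by rewrite -leNgt; apply: bigmax_le => // i Pi; rewrite leNgt noF.
Qed.

Lemma fstar_rev_cons_gtP {R : realDomainType} {A X : finType}
    {f : A -> X -> A -> R} {a x v b} :
  reflect (exists2 c, 0 < fstar_rev f a v c & 0 < f c x b)
          (0 < fstar_rev f a (x :: v) b).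
Proof.
apply: (iffP bigmax_gtP) => [[c _] | [c v_ac x_cb]].
  by rewrite lt_min => /andP[]; exists c.
by exists c; rewrite // lt_min v_ac.
Qed.

Section Homomorphism.
Variables (R : realDomainType) (A B X : finType).
Variables (f : A -> X -> A -> R) (g : B -> X -> B -> R) (phi : A -> B).
Hypothesis phi_hom : fuzzy_hom f g phi.

Lemma hom_trans_gtP a x b :
  reflect (exists2 a', phi a' = b & 0 < f a x a') (0 < g (phi a) x b).
Proof.
rewrite phi_hom; apply: (iffP bigmax_gtP) => [[a' /eqP] | [a' <-]].
  by exists a'.
by exists a'; rewrite ?eqxx.
Qed.

Lemma hom_fstar_rev_gtP a w b :
  reflect (exists2 a', phi a' = b & 0 < fstar_rev f a w a')
          (0 < fstar_rev g (phi a) w b).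
Proof.
elim: w b => [|x v IHv] b /=.
  apply: (iffP idP) => [|[a' <-]]; last by case: eqP => [->|_]; rewrite ?eqxx ?ltxx.
  by case: eqP => [<- _|_]; [exists a; rewrite ?eqxx ?ltr01 | rewrite ltxx].
apply: (iffP fstar_rev_cons_gtP).
  move=> [_ /IHv[c <- v_ac] /hom_trans_gtP[a' <- x_ca']].
  by exists a' => //; apply/fstar_rev_cons_gtP; exists c.
move=> [a' <- /fstar_rev_cons_gtP[c v_ac x_ca']].
exists (phi c); first by apply/IHv; exists c.
by apply/hom_trans_gtP; exists a'.
Qed.

Lemma reach_hom a w : reach g (phi a) w = phi @: reach f a w.
Proof.
apply/setP => b; rewrite inE /fstar; apply/idP/imsetP.
  by move/hom_fstar_rev_gtP => [a' <- w_aa']; exists a'; rewrite ?inE.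
by move=> [a' w_aa' ->]; apply/hom_fstar_rev_gtP; exists a'; rewrite ?inE in w_aa'.
Qed.

Hypothesis phi_surj : forall b : B, exists a : A, phi a = b.

Lemma D1dir_epi w : D1dir f w -> D1dir g w.
Proof.
move=> [c reach_c]; exists (phi c) => b; have [a <-] := phi_surj b.
by rewrite reach_hom reach_c imset_set1.
Qed.

Lemma D2dir_epi w : D2dir f w -> D2dir g w.
Proof.
move=> reach_eq b1 b2; have [a1 <-] := phi_surj b1; have [a2 <-] := phi_surj b2.
by rewrite !reach_hom (reach_eq a1 a2).
Qed.

Lemma D3dir_epi w : D3dir f w -> D3dir g w.
Proof.
move=> [c reach_c]; exists (phi c) => b; have [a <-] := phi_surj b.
by rewrite reach_hom imset_f.
Qed.

Lemma directing_epi i w : directing i f w -> directing i g w.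
Proof.
case: i => [|[|[|i]]];
  [exact: D3dir_epi | exact: D1dir_epi | exact: D2dir_epi | exact: D3dir_epi].
Qed.

Lemma directable_epi i : directable i f -> directable i g.
Proof. by move=> [w w_dir]; exists w; apply: directing_epi. Qed.

End Homomorphism.

Theorem proposition6p4 (R : realDomainType) (A B X : finType)
    (f : A -> X -> A -> R) (g : B -> X -> B -> R) (phi : A -> B) :
  (0 < #|A|)%N -> (0 < #|B|)%N -> (0 < #|X|)%N ->
  fuzzy_trans f -> fuzzy_trans g ->
  fuzzy_epi f g phi ->
  forall i : nat, i \in [:: 1%N; 2%N; 3%N] ->
    (forall w : seq X, directing i f w -> directing i g w) /\
    (directable i f -> directable i g).
Proof.
(* Only the positivity of membership degrees matters, and [directing i] is
   defined for every i. *)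
move=> _ _ _ _ _ [phi_hom phi_surj] i _.
by split; [exact: directing_epi | exact: directable_epi].
Qed.
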